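(* Consider the parallel-links routing game described in the context in which all users have equal demands $r^i=R/N$ for every $i$, and the costs are $J^i(\mathbf f)=\sum_l f^i_lT_l(f_l)$ with each $T_l:[0,\infty)\to[0,\infty)$ strictly increasing, convex and continuously differentiable. Then: (1) there is at most one cost vector $\tilde{\mathbf g}\in\mathcal G$ satisfying both Pareto optimality (N2) and Symmetry (N3); (2) $PoS=1$; moreover the NBS cost vector is the cost vector of a single feasible routing profile whose link totals are system-optimal (so the NBS outcome is socially optimal with probability $1$).
   Context: Parallel-links routing game: users $\mathcal N=\{1,\dots,N\}$ share parallel links $\mathcal L=\{1,\dots,L\}$ from a common source to a common destination. User $i$ has demand $r^i>0$, $R=\sum_ir^i$. A routing strategy of user $i$ is $\mathbf f^i=(f^i_l)_{l}$ with $f^i_l\ge0$, $\sum_lf^i_l=r^i$; feasible profiles $\mathbf f=(\mathbf f^1,\dots,\mathbf f^N)$ form the set $\mathbf F$; $f_l=\sum_if^i_l$. NEP: a feasible $\hat{\mathbf f}$ such that each $\hat{\mathbf f}^i$ minimizes $J^i$ over user $i$'s feasible strategies given the others'; it exists and is unique. $\hat J^i=J^i(\hat{\mathbf f})$. Social cost $J_{sys}(\mathbf f)=\sum_iJ^i(\mathbf f)=\sum_lf_lT_l(f_l)$; $J^*_{sys}$ its minimum over $\mathbf F$, attained at system-optimal link flows $(f^*_l)$. Bargaining: $\mathcal G$ is the set of all vectors $\sum_{m=1}^Mp_m(J^1(\mathbf f(m)),\dots,J^N(\mathbf f(m)))$ with $M$ finite, $p_m>0$, $\sum_mp_m=1$,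 $\mathbf f(m)\in\mathbf F$. Axiom N2 (Pareto optimality) for $\tilde{\mathbf g}\in\mathcal G$: there is no $\mathbf g\in\mathcal G$ with $g^i\le\tilde g^i$ for all $i$ and $g^i<\tilde g^i$ for some $i$. Axiom N3 (Symmetry): for any users $i,k$, if $\hat J^i=\hat J^k$ and $\mathcal G$ is invariant under swapping coordinates $i$ and $k$, then $\tilde g^i=\tilde g^k$. The NBS is the unique $\tilde{\mathbf g}$ maximizing $\prod_i(\hat J^i-g^i)$ over $\mathbf g\in\mathcal G$ with $g^i\le\hat J^i$ for all $i$. $PoS=(\sum_i\tilde g^i)/J^*_{sys}$. *)

From HB Require Import structures.
From mathcomp Require Import all_boot all_order all_algebra.
From mathcomp Require Import reals.
Set Implicit Arguments. Unset Strict Implicit. Unset Printing Implicit Defensive.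
Import Order.TTheory GRing.Theory Num.Theory.
Local Open Scope ring_scope.

Section Routing.
Variables (R : realType) (N L : nat).

(* A routing profile: f i l = flow of user i on link l. *)
Definition profile := 'I_N -> 'I_L -> R.

Definition feasible_strategy (ri : R) (h : 'I_L -> R) : Prop :=
  (forall l, 0 <= h l) /\ \sum_(l < L) h l = ri.

Definition feasible (r : 'I_N -> R) (f : profile) : Prop :=
  forall i, feasible_strategy (r i) (f i).

Definition ftot (f : profile) (l : 'I_L) : R := \sum_(i < N) f i l.

Definition cost (T : 'I_L -> R -> R) (f : profile) (i : 'I_N) : R :=
  \sum_(l < L) f i l * T l (ftot f l).

Definition replace (f : profile) (i : 'I_N) (h : 'I_L -> R) : profile :=
  fun j => if j == i then h else f j.

Definition is_NEP (T : 'I_L -> R -> R) (r : 'I_N -> R) (f : profile) : Prop :=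
  feasible r f /\
  forall i h, feasible_strategy (r i) h ->
    cost T f i <= cost T (replace f i h) i.

Definition Jsys (T : 'I_L -> R -> R) (f : profile) : R :=
  \sum_(i < N) cost T f i.

Definition is_sysopt (T : 'I_L -> R -> R) (r : 'I_N -> R) (f : profile) : Prop :=
  feasible r f /\ forall f', feasible r f' -> Jsys T f <= Jsys T f'.

Definition inG (T : 'I_L -> R -> R) (r : 'I_N -> R) (g : 'I_N -> R) : Prop :=
  exists (M : nat) (p : 'I_M -> R) (fs : 'I_M -> profile),
    (forall m, 0 < p m) /\ \sum_(m < M) p m = 1 /\
    (forall m, feasible r (fs m)) /\
    forall i, g i = \sum_(m < M) p m * cost T (fs m) i.

Definition pareto_N2 (T : 'I_L -> R -> R) (r : 'I_N -> R) (g : 'I_N -> R) : Prop :=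
  ~ exists g', inG T r g' /\ (forall i, g' i <= g i) /\ exists i, g' i < g i.

Definition swap (i k : 'I_N) (g : 'I_N -> R) : 'I_N -> R :=
  fun j => if j == i then g k else if j == k then g i else g j.

Definition symmetry_N3 (T : 'I_L -> R -> R) (r : 'I_N -> R)
    (Jhat : 'I_N -> R) (g : 'I_N -> R) : Prop :=
  forall i k, Jhat i = Jhat k ->
    (forall g', inG T r g' <-> inG T r (swap i k g')) ->
    g i = g k.

Definition is_NBS (T : 'I_L -> R -> R) (r : 'I_N -> R)
    (Jhat : 'I_N -> R) (g : 'I_N -> R) : Prop :=
  inG T r g /\ (forall i, g i <= Jhat i) /\
  forall g', inG T r g' -> (forall i, g' i <= Jhat i) ->
    \prod_(i < N) (Jhat i - g' i) <= \prod_(i < N) (Jhat i - g i).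

End Routing.

Definition nonneg_valued (R : realType) (T : R -> R) : Prop :=
  forall x, 0 <= x -> 0 <= T x.

Definition strictly_increasing_nonneg (R : realType) (T : R -> R) : Prop :=
  forall x y, 0 <= x -> x < y -> T x < T y.

Definition convex_nonneg (R : realType) (T : R -> R) : Prop :=
  forall x y t, 0 <= x -> 0 <= y -> 0 <= t -> t <= 1 ->
    T (t * x + (1 - t) * y) <= t * T x + (1 - t) * T y.

(* Continuously differentiable on [0,oo): there is a derivative dT,
   one-sided (from the right) at 0, two-sided at x > 0, and dT is
   continuous on [0,oo). *)
Definition C1_nonneg (R : realType) (T : R -> R) : Prop :=
  exists dT : R -> R,
    (forall x, 0 <= x -> forall eps, 0 < eps -> exists2 delta, 0 < delta &
       forall h, h != 0 -> `|h| < delta -> 0 <= x + h ->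
         `|(T (x + h) - T x) / h - dT x| < eps) /\
    (forall x, 0 <= x -> forall eps, 0 < eps -> exists2 delta, 0 < delta &
       forall y, 0 <= y -> `|y - x| < delta -> `|dT y - dT x| < eps).

From HB Require Import structures.
From mathcomp Require Import all_boot all_order all_algebra.
From mathcomp Require Import perm reals.
From mathcomp Require Import all_classical all_reals all_analysis.
From mathcomp Require Import ring lra.
Import Order.TTheory GRing.Theory Num.Theory.
Import numFieldNormedType.Exports.
Local Open Scope ring_scope.
Local Open Scope classical_set_scope.
Set Implicit Arguments. Unset Strict Implicit. Unset Printing Implicit Defensive.

(* With equal demands the game is symmetric. Comparing the first-order
   conditions of two users i, k at the NEP, each deviating towards the other's
   strategy, gives sum_l (f^k_l - f^i_l)^2 T_l'(f_l) <= 0; since T_l' > 0 on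
   links carrying flow, all users play the same strategy and bear the same
   cost Jhat.  Splitting a system-optimal link flow equally among the users
   yields a point g* of G whose coordinates all equal J*_sys / N, while every
   point of G has coordinate sum at least J*_sys.  By AM-GM,
   prod_i (Jhat - g_i) <= (Jhat - J*_sys / N)^N on G with equality only at g*,
   so g* is the NBS; and a symmetric Pareto-optimal point of G is constant,
   at least J*_sys / N, and not larger, lest g* dominate it. *)

Section HalfLineDerivative.
Variable R : realType.
Implicit Types (T : R -> R) (x D c : R).

Definition is_derive_halfline T x D : Prop :=
  forall eps, 0 < eps -> exists2 delta, 0 < delta &
    forall h, h != 0 -> `|h| < delta -> 0 <= x + h ->
      `|(T (x + h) - T x) / h - D| < eps.

Lemma cvgr_sum (U : Type) (F : set_system U) {FF : Filter F} (I : Type)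
    (s : seq I) (f : I -> U -> R) (l : I -> R) :
  (forall i, f i u @[u --> F] --> l i) ->
  \sum_(i <- s) f i u @[u --> F] --> \sum_(i <- s) l i.
Proof.
move=> fl; elim: s => [|i s IH].
  by under eq_fun do rewrite big_nil; rewrite big_nil; exact: cvg_cst.
by under eq_fun do rewrite big_cons; rewrite big_cons; exact: cvgD.
Qed.

Lemma segment_ge0 x c e : 0 <= x -> 0 <= x + c -> 0 <= e <= 1 -> 0 <= x + e * c.
Proof. by move=> x0 xc0 /andP[e0 e1]; nra. Qed.

Lemma is_derive_halfline_quotient T x D c :
  is_derive_halfline T x D -> 0 <= x -> 0 <= x + c ->
  (T (x + e * c) - T x) / e @[e --> 0^'+] --> c * D.
Proof.
move=> dT x0 xc0; have [->|c0] := eqVneq c 0.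
  under eq_fun do rewrite mulr0 addr0 subrr mul0r.
  by rewrite mul0r; exact: cvg_cst.
have c_gt0 : 0 < `|c| by rewrite normr_gt0.
apply/cvgrPdist_lt => eps eps0.
have [d d0 hd] := dT (eps / `|c|) (divr_gt0 eps0 c_gt0).
near=> e.
have e0 : 0 < e by near: e; exact: nbhs_right_gt.
have ec0 : e * c != 0 by rewrite mulf_neq0 // gt_eqF.
have -> : (T (x + e * c) - T x) / e = c * ((T (x + e * c) - T x) / (e * c)).
  by field; rewrite c0 gt_eqF.
rewrite -mulrBr normrM distrC mulrC -ltr_pdivlMr //.
apply: hd => //; last first.
  apply: segment_ge0 => //; rewrite (ltW e0) /=.
  by near: e; apply: nbhs_right_le; exact: ltr01.
rewrite normrM (gtr0_norm e0) -ltr_pdivlMr //.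
by near: e; apply: nbhs_right_lt; exact: divr_gt0.
Unshelve. all: by end_near.
Qed.

Lemma is_derive_halfline_gt0 T x D :
  strictly_increasing_nonneg T -> convex_nonneg T ->
  is_derive_halfline T x D -> 0 < x -> 0 < D.
Proof.
move=> Tinc Tcvx dT x0.
have xx0 : 0 <= x + - x by rewrite subrr.
have : - x * D <= T 0 - T x.
  apply: (cvgr_to_le (is_derive_halfline_quotient dT (ltW x0) xx0)).
  near=> e.
  have e0 : 0 < e by near: e; exact: nbhs_right_gt.
  have e1 : e <= 1 by near: e; apply: nbhs_right_le; exact: ltr01.
  have t0 : 0 <= 1 - e by rewrite subr_ge0.
  have t1 : 1 - e <= 1 by rewrite gerBl ltW.
  have := Tcvx x 0 (1 - e) (ltW x0) (lexx 0) t0 t1.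
  rewrite mulr0 addr0 (_ : (1 - e) * x = x + e * - x); last by ring.
  by rewrite ler_pdivrMr //; lra.
have := Tinc 0 x (lexx 0) x0; rewrite mulNr; nra.
Unshelve. all: by end_near.
Qed.

Lemma is_derive_halfline_cvg T x D c :
  is_derive_halfline T x D -> 0 <= x -> 0 <= x + c ->
  T (x + e * c) @[e --> 0^'+] --> T x.
Proof.
move=> dT x0 xc0.
have lim : T x + e * ((T (x + e * c) - T x) / e) @[e --> 0^'+] --> T x + 0 * (c * D).
  apply: cvgD; first exact: cvg_cst.
  by apply: cvgM; [exact: cvg_at_right_filter | exact: is_derive_halfline_quotient].
rewrite mul0r addr0 in lim; apply: cvg_trans lim; apply: near_eq_cvg.
near=> e.
have e0 : 0 < e by near: e; exact: nbhs_right_gt.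
by rewrite mulrC divfK ?gt_eqF // addrC subrK.
Unshelve. all: by end_near.
Qed.

Lemma link_cost_quotient T x D a c :
  is_derive_halfline T x D -> 0 <= x -> 0 <= x + c ->
  ((a + e * c) * T (x + e * c) - a * T x) / e @[e --> 0^'+]
    --> c * T x + a * (c * D).
Proof.
move=> dT x0 xc0.
have lim : c * T (x + e * c) + a * ((T (x + e * c) - T x) / e) @[e --> 0^'+]
    --> c * T x + a * (c * D).
  apply: cvgD; apply: cvgM; do ?exact: cvg_cst.
    exact: is_derive_halfline_cvg dT x0 xc0.
  exact: is_derive_halfline_quotient.
apply: cvg_trans lim; apply: near_eq_cvg.
near=> e.
have e0 : 0 < e by near: e; exact: nbhs_right_gt.
by field; rewrite gt_eqF.
Unshelve. all: by end_near.
Qed.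

Lemma dist_max0 (x z : R) : `|Num.max z 0 - Num.max x 0| <= `|z - x|.
Proof.
have h1 := ler_norm (z - x); have h2 : x - z <= `|z - x| by rewrite distrC ler_norm.
rewrite !maxEle ler_norml; case: ifP => hz; case: ifP => hx; apply/andP; split; lra.
Qed.

Lemma is_derive_halfline_lipschitz T y D :
  is_derive_halfline T y D -> exists2 d, 0 < d &
    forall z, 0 <= z -> `|z - y| < d -> `|T z - T y| <= (`|D| + 1) * `|z - y|.
Proof.
move=> dT; have [d d0 hd] := dT 1 ltr01; exists d => // z z0 zd.
have [->|zy] := eqVneq z y; first by rewrite !subrr normr0 mulr0.
have hzy : z - y != 0 by rewrite subr_eq0.
have := hd (z - y) hzy zd; rewrite addrC subrK => /(_ z0) q.
have -> : T z - T y = ((T z - T y) / (z - y) - D + D) * (z - y) by field.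
rewrite normrM ler_wpM2r // (le_trans (ler_normD _ _)) // addrC lerD2l.
exact: ltW.
Qed.

(* [T] is only given on [0, +oo); precomposing with [Num.max _ 0] extends it
   continuously to the whole line. *)
Lemma is_derive_halfline_continuous T dT :
  (forall x, 0 <= x -> is_derive_halfline T x (dT x)) ->
  continuous (fun x => T (Num.max x 0)).
Proof.
move=> hd x; set y := Num.max x 0.
have y0 : 0 <= y by rewrite le_max lexx orbT.
have [d d0 lip] := is_derive_halfline_lipschitz (hd y y0).
set K := `|dT y| + 1 in lip.
have K0 : 0 < K by rewrite ltr_pwDr.
apply/cvgrPdist_lt => eps eps0.
have r0 : 0 < Num.min d (eps / K) by rewrite lt_min d0 divr_gt0.
near=> z.
have zx : `|z - x| < Num.min d (eps / K).
  by near: z; apply: (@cvgr_distC_lt _ _ _ _ _ id); first exact: cvg_id.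
move: zx; rewrite lt_min => /andP[zd ze].
have mz : `|Num.max z 0 - y| <= `|z - x| by exact: dist_max0.
rewrite distrC /=; apply: le_lt_trans (lip _ _ _) _.
- by rewrite le_max lexx orbT.
- exact: le_lt_trans mz zd.
rewrite mulrC -ltr_pdivlMr //; exact: le_lt_trans mz ze.
Unshelve. all: by end_near.
Qed.

End HalfLineDerivative.

Section RoutingGame.
Variables (R : realType) (N L : nat).
Implicit Types (f : profile R N L) (r : 'I_N -> R) (T : 'I_L -> R -> R).

Lemma ftot_replace f i h l : ftot (replace f i h) l = ftot f l - f i l + h l.
Proof.
rewrite /ftot (bigD1 i) //= [in RHS](bigD1 i) //= /replace eqxx.
by rewrite (eq_bigr (fun j => f j l)) => [|j /negbTE -> //]; ring.
Qed.

Lemma eq_cost T f i j : (forall l, f i l = f j l) -> cost T f i = cost T f j.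
Proof. by move=> fij; apply: eq_bigr => l _; rewrite fij. Qed.

Lemma cost_replace T f i h :
  cost T (replace f i h) i = \sum_(l < L) h l * T l (ftot f l - f i l + h l).
Proof. by apply: eq_bigr => l _; rewrite ftot_replace /replace eqxx. Qed.

Lemma flow_le_ftot r f i l : feasible r f -> f i l <= ftot f l.
Proof.
move=> hf; rewrite /ftot (bigD1 i) //= lerDl.
by apply: sumr_ge0 => j _; exact: (hf j).1.
Qed.

Lemma ftot_ge0 r f l : feasible r f -> 0 <= ftot f l.
Proof. by move=> hf; apply: sumr_ge0 => i _; exact: (hf i).1. Qed.

Lemma sum_ftot r f : feasible r f -> \sum_(l < L) ftot f l = \sum_(i < N) r i.
Proof. by move=> hf; rewrite /ftot exchange_big; apply: eq_bigr => i _; exact: (hf i).2. Qed.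

Lemma Jsys_ftot T f : Jsys T f = \sum_(l < L) ftot f l * T l (ftot f l).
Proof. by rewrite /Jsys /cost exchange_big; apply: eq_bigr => l _; rewrite mulr_suml. Qed.

Lemma feasible_strategy_segment (ri e : R) (a h : 'I_L -> R) :
  feasible_strategy ri a -> feasible_strategy ri h -> 0 <= e <= 1 ->
  feasible_strategy ri (fun l => a l + e * (h l - a l)).
Proof.
move=> [a0 suma] [h0 sumh] /andP[e0 e1]; split=> [l|].
  by have := a0 l; have := h0 l; nra.
by rewrite big_split /= -mulr_sumr sumrB suma sumh subrr mulr0 addr0.
Qed.

Lemma nep_variational_inequality T r f (D : 'I_L -> R) i h :
  is_NEP T r f -> (forall l, is_derive_halfline (T l) (ftot f l) (D l)) ->
  feasible_strategy (r i) h ->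
  0 <= \sum_(l < L) (h l - f i l) * (T l (ftot f l) + f i l * D l).
Proof.
move=> [hf nep] hD hh.
pose q e := \sum_(l < L)
  ((f i l + e * (h l - f i l)) * T l (ftot f l + e * (h l - f i l)) - f i l * T l (ftot f l)) / e.
have q_cvg : q e @[e --> 0^'+] --> \sum_(l < L)
    ((h l - f i l) * T l (ftot f l) + f i l * ((h l - f i l) * D l)).
  apply: cvgr_sum => l; apply: link_cost_quotient (hD l) (ftot_ge0 l hf) _.
  by rewrite addrCA addr_ge0 ?subr_ge0 ?(flow_le_ftot _ _ hf) ?(hh.1 l).
rewrite (eq_bigr (fun l => (h l - f i l) * T l (ftot f l) + f i l * ((h l - f i l) * D l)));
  last by move=> l _; ring.
apply: (cvgr_to_ge q_cvg); near=> e.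
have e0 : 0 < e by near: e; exact: nbhs_right_gt.
have e1 : e <= 1 by near: e; apply: nbhs_right_le; exact: ltr01.
have e01 : 0 <= e <= 1 by rewrite (ltW e0) e1.
rewrite /q -mulr_suml sumrB divr_ge0 ?(ltW e0) // subr_ge0.
have shift l : ftot f l - f i l + (f i l + e * (h l - f i l)) = ftot f l + e * (h l - f i l).
  by rewrite addrA subrK.
have := nep i _ (feasible_strategy_segment (hf i) hh e01); rewrite cost_replace.
by under eq_bigr do rewrite shift.
Unshelve. all: by end_near.
Qed.

Lemma nep_equal_demands_symmetric T r f (D : 'I_L -> R) i k :
  (forall l, strictly_increasing_nonneg (T l)) -> (forall l, convex_nonneg (T l)) ->
  is_NEP T r f -> (forall l, is_derive_halfline (T l) (ftot f l) (D l)) ->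
  r i = r k -> forall l, f i l = f k l.
Proof.
move=> Tinc Tcvx nep hD rik; have hf := nep.1.
pose w l := (f k l - f i l) ^+ 2 * D l.
have w_gt0 l : f i l != f k l -> 0 < w l.
  move=> ne; rewrite /w mulr_gt0 //.
    by rewrite lt0r sqr_ge0 andbT sqrf_eq0 subr_eq0 eq_sym.
  apply: (is_derive_halfline_gt0 (Tinc l) (Tcvx l) (hD l)).
  rewrite lt_neqAle (ftot_ge0 _ hf) andbT; apply: contra ne => /eqP F0.
  have := flow_le_ftot i l hf; have := flow_le_ftot k l hf.
  by have := (hf i).1 l; have := (hf k).1 l; rewrite -F0 => *; apply/eqP; lra.
have w_ge0 l : 0 <= w l.
  by have [e|/w_gt0/ltW //] := eqVneq (f i l) (f k l); rewrite /w e subrr expr0n mul0r.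
(* The variational inequalities of i towards f k and of k towards f i add up
   to 0 <= - sum_l w l. *)
have sum_w_le0 : \sum_(l < L) w l <= 0.
  have fk_i : feasible_strategy (r i) (f k) by rewrite rik; exact: hf k.
  have fi_k : feasible_strategy (r k) (f i) by rewrite -rik; exact: hf i.
  have := addr_ge0 (nep_variational_inequality nep hD fk_i)
                   (nep_variational_inequality nep hD fi_k).
  rewrite -big_split /= -oppr_le0 -sumrN; apply: le_trans.
  by apply: ler_sum => l _; rewrite /w; lra.
move=> l; apply/eqP; apply: contraT => /w_gt0 wl.
suff : 0 < \sum_(l < L) w l by rewrite ltNge sum_w_le0.
by rewrite (bigD1 l) //= ltr_pwDl // sumr_ge0.
Qed.

Lemma exists_min_link_cost T (s : R) :
  (0 < L)%N -> 0 <= s -> (forall l, continuous (fun x : R => T l (Num.max x 0))) ->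
  exists2 x : 'I_L -> R, (forall l, 0 <= x l) /\ \sum_(l < L) x l = s &
    forall y : 'I_L -> R, (forall l, 0 <= y l) -> \sum_(l < L) y l = s ->
      \sum_(l < L) x l * T l (x l) <= \sum_(l < L) y l * T l (y l).
Proof.
move=> L0 s0 Tcont.
pose A := [set v : 'rV[R]_L | (forall l, 0 <= v ord0 l) /\ \sum_(l < L) v ord0 l = s].
pose phi (v : 'rV[R]_L) := \sum_(l < L) v ord0 l * T l (Num.max (v ord0 l) 0).
have coord_cont l : continuous (fun v : 'rV[R]_L => v ord0 l) by exact: coord_continuous.
have phi_cont : continuous phi.
  move=> v; apply: (cvgr_sum (F := nbhs v)) => l; apply: cvgM; first exact: coord_cont.
  exact: continuous_comp (coord_cont l _) (Tcont l _).
have A_closed : closed A.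
  have sum_cont : continuous (fun v : 'rV[R]_L => \sum_(l < L) v ord0 l).
    by move=> v; apply: (cvgr_sum (F := nbhs v)) => l; exact: coord_cont.
  have -> : A = \bigcap_(l in setT) [set v | 0 <= v ord0 l] `&`
                [set v | \sum_(l < L) v ord0 l = s].
    by apply/seteqP; split => v /= [h1 h2]; split => // l; [move=> _|]; exact: h1.
  apply: closedI; first apply: closed_bigI => l _.
    exact: preimage_closed (fun v _ => coord_cont l v) (@closed_ge R 0).
  exact: preimage_closed (fun v _ => sum_cont v) (@closed_eq R s).
have A_compact : compact A.
  apply: subclosed_compact A_closed
    (@rV_compact R L (fun=> `[0, s]%classic) (fun _ => @segment_compact R 0 s)) _.
  move=> v [v0 vs] l /=; rewrite in_itv /= v0 -vs.
  by rewrite (bigD1 l) //= lerDl sumr_ge0.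
have A_nonempty : A !=set0.
  exists (\row_(l < L) (s / L%:R)); split => [l|]; rewrite ?mxE ?divr_ge0 ?ler0n //.
  under eq_bigr do rewrite mxE.
  by rewrite sumr_const card_ord -[_ *+ L]mulr_natr divfK // pnatr_eq0 -lt0n.
have [c /set_mem [c0 cs] cmin] := compact_EVT_min A_nonempty A_compact
  (continuous_subspaceT phi_cont).
have phiE v : A v -> phi v = \sum_(l < L) v ord0 l * T l (v ord0 l).
  by move=> [v0 _]; apply: eq_bigr => l _; rewrite max_l.
exists (fun l => c ord0 l) => // y y0 ys.
have Ay : A (\row_(l < L) y l).
  by split => [l|]; [rewrite mxE | under eq_bigr do rewrite mxE].
have := cmin _ (mem_set Ay); rewrite !phiE //.
by under [X in _ <= X -> _]eq_bigr do rewrite mxE.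
Qed.

Lemma exists_symmetric_sysopt T r :
  (0 < N)%N -> (0 < L)%N -> (forall i, 0 <= r i) ->
  (forall i, r i = (\sum_(j < N) r j) / N%:R) ->
  (forall l, continuous (fun x : R => T l (Num.max x 0))) ->
  exists2 f, is_sysopt T r f & forall i j, f i = f j.
Proof.
move=> N0 L0 r0 req Tcont.
have sum_r0 : 0 <= \sum_(j < N) r j by exact: sumr_ge0.
have [x [x0 xs] xmin] := exists_min_link_cost L0 sum_r0 Tcont.
have N0R : (N%:R : R) != 0 by rewrite pnatr_eq0 -lt0n.
pose f : profile R N L := fun _ l => x l / N%:R.
have ftot_f l : ftot f l = x l.
  by rewrite /ftot sumr_const card_ord -[_ *+ N]mulr_natr divfK.
have hf : feasible r f.
  by move=> i; split => [l|]; rewrite ?divr_ge0 ?ler0n // -mulr_suml xs req.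
exists f => //; split => // g hg.
rewrite !Jsys_ftot (eq_bigr (fun l => x l * T l (x l))) => [|l _]; last by rewrite ftot_f.
by apply: xmin => [l|]; [exact: ftot_ge0 hg | rewrite (sum_ftot hg)].
Qed.

Lemma Jsys_gt0 T r f :
  (0 < N)%N -> (forall i, 0 < r i) -> (forall l x, 0 < x -> 0 < T l x) ->
  feasible r f -> 0 < Jsys T f.
Proof.
move=> N0 r0 Tpos hf.
have term_ge0 l : 0 <= ftot f l * T l (ftot f l).
  have := ftot_ge0 l hf; rewrite le0r => /orP[/eqP->|F0]; first by rewrite mul0r.
  by rewrite ltW // mulr_gt0 // Tpos.
have sum_gt0 : 0 < \sum_(l < L) ftot f l.
  rewrite (sum_ftot hf) (bigD1 (Ordinal N0)) //=; apply: ltr_pwDl => //.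
  by apply: sumr_ge0 => i _; exact: ltW.
have /existsP[l Fl] : [exists l, 0 < ftot f l].
  apply: contraLR sum_gt0 => /existsPn F_le0; rewrite -leNgt.
  by apply: sumr_le0 => l _; rewrite leNgt F_le0.
rewrite Jsys_ftot (bigD1 l) //=; apply: ltr_pwDl; first by rewrite mulr_gt0 ?Tpos.
by apply: sumr_ge0 => j _; exact: term_ge0.
Qed.

End RoutingGame.

Section BargainingSet.
Variables (R : realType) (N L : nat) (T : 'I_L -> R -> R) (r : 'I_N -> R).
Implicit Types (f : profile R N L) (g : 'I_N -> R).

Lemma inG_cost f : feasible r f -> inG T r (cost T f).
Proof.
move=> hf; exists 1%N, (fun=> 1), (fun=> f).
split; first by move=> _; exact: ltr01.
split; first by rewrite big_ord1.
by split=> // i; rewrite big_ord1 mul1r.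
Qed.

Lemma sum_inG_ge (phi : R) g :
  (forall f, feasible r f -> phi <= Jsys T f) -> inG T r g -> phi <= \sum_(i < N) g i.
Proof.
move=> phi_le [M [p [fs [p0 [p1 [hfs hg]]]]]].
under eq_bigr do rewrite hg.
rewrite exchange_big /= -[phi]mul1r -p1 mulr_suml.
by apply: ler_sum => m _; rewrite -mulr_sumr ler_pM2l // phi_le.
Qed.

Lemma cost_perm (s : {perm 'I_N}) f i :
  cost T (fun j => f (s j)) i = cost T f (s i).
Proof.
apply: eq_bigr => l _; congr (_ * T l _).
by rewrite /ftot [RHS](reindex_inj (@perm_inj _ s)).
Qed.

Lemma inG_perm (s : {perm 'I_N}) g :
  (forall i j, r i = r j) -> inG T r g -> inG T r (fun i => g (s i)).
Proof.
move=> r_eq [M [p [fs [p0 [p1 [hfs hg]]]]]].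
exists M, p, (fun m j => fs m (s j)); do 2!split => //; split.
  by move=> m j; rewrite (r_eq j (s j)); exact: hfs.
by move=> i; rewrite hg; apply: eq_bigr => m _; rewrite /= cost_perm.
Qed.

Lemma swap_tperm (i k : 'I_N) g : swap i k g = (fun j => g (tperm i k j)).
Proof.
apply/funext => j; rewrite /swap; case: tpermP => [->|->|/eqP/negbTE-> /eqP/negbTE->].
- by rewrite eqxx.
- by case: eqP => [->|_]; rewrite ?eqxx.
- by [].
Qed.

Lemma inG_swap (i k : 'I_N) g :
  (forall i j, r i = r j) -> inG T r g <-> inG T r (swap i k g).
Proof.
move=> r_eq; rewrite swap_tperm; split; first exact: inG_perm.
by move=> /(inG_perm (tperm i k) r_eq); under eq_fun do rewrite tpermK.
Qed.

End BargainingSet.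

Section ConstantVectors.
Variable R : realType.

Lemma sumr_const_ord n (v : 'I_n -> R) i :
  (forall j, v j = v i) -> \sum_(j < n) v j = v i *+ n.
Proof. by move=> v_const; rewrite (eq_bigr (fun=> v i)) // sumr_const card_ord. Qed.

Lemma ler_sum_const n (u v : 'I_n -> R) i :
  (forall j, u j = u i) -> (forall j, v j = v i) ->
  \sum_(j < n) u j <= \sum_(j < n) v j -> u i <= v i.
Proof.
move=> u_const v_const; have n0 : (0 < n)%N by apply: leq_ltn_trans (ltn_ord i).
by rewrite (sumr_const_ord u_const) (sumr_const_ord v_const) ler_pMn2r.
Qed.

Lemma leif_prodr_const n (E S : 'I_n -> R) :
  (forall i, 0 <= E i) -> (forall i j, S i = S j) ->
  \sum_(i < n) E i <= \sum_(i < n) S i ->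
  \prod_(i < n) E i <= \prod_(i < n) S i ?= iff [forall i, E i == S i].
Proof.
case: n E S => [|n] E S E0 S_const sumES.
  by rewrite !big_ord0; split; rewrite ?eqxx //; apply/esym/forallP => -[].
set s := S ord0; have SE i : S i = s by exact: S_const.
have n0 : 0 < n.+1%:R :> R by rewrite ltr0n.
set mu := (\sum_i E i) / n.+1%:R.
have mu0 : 0 <= mu by rewrite divr_ge0 ?ler0n ?sumr_ge0.
have mu_le_s : mu <= s by rewrite ler_pdivrMr // mulr_natr -(sumr_const_ord SE).
have amgm : \prod_i E i <= mu ^+ n.+1 ?= iff [forall i, forall j, E i == E j].
  by have := @leif_AGM R _ 'I_n.+1 E (fun i _ => E0 i); rewrite card_ord.
have pow : mu ^+ n.+1 <= s ^+ n.+1 ?= iff (mu == s).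
  rewrite -(eqrXn2 (ltn0Sn n) mu0) ?(le_trans mu0) //; apply: leif_eq.
  by rewrite lerXn2r ?nnegrE ?(le_trans mu0).
have [prod_le prod_eq] := leif_trans amgm pow.
rewrite [\prod_i S i](eq_bigr (fun=> s)) // prodr_const card_ord; split=> //; rewrite prod_eq.
apply/andP/forallP => [[/forallP E_const /eqP mu_s] i | ES].
  have Ec j : E j = E i by apply/eqP; rewrite eq_sym; exact: (forallP (E_const i) j).
  by rewrite SE -mu_s /mu (sumr_const_ord Ec) -[_ *+ n.+1]mulr_natr mulfK // pnatr_eq0.
have ES' i : E i = E ord0 by rewrite (eqP (ES i)) (eqP (ES ord0)) SE.
split; first by apply/forallP => i; apply/forallP => j; rewrite !ES'.
by rewrite /mu (sumr_const_ord ES') -[_ *+ n.+1]mulr_natr mulfK ?pnatr_eq0 // (eqP (ES ord0)).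
Qed.

End ConstantVectors.

Section NashBargaining.
Variables (R : realType) (N L : nat) (T : 'I_L -> R -> R) (r : 'I_N -> R).
Variables (Jhat gstar : 'I_N -> R).
Hypotheses (gstar_in : inG T r gstar) (gstar_const : forall i j, gstar i = gstar j).
Hypothesis gstar_min : forall g, inG T r g -> \sum_(i < N) gstar i <= \sum_(i < N) g i.
Hypotheses (Jhat_const : forall i j, Jhat i = Jhat j) (gstar_le_Jhat : forall i, gstar i <= Jhat i).

Lemma prod_gain_le g : inG T r g -> (forall i, g i <= Jhat i) ->
  \prod_(i < N) (Jhat i - g i) <= \prod_(i < N) (Jhat i - gstar i)
    ?= iff [forall i, Jhat i - g i == Jhat i - gstar i].
Proof.
move=> hg g_le; apply: leif_prodr_const => [i|i j|].
- by rewrite subr_ge0.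
- by rewrite (Jhat_const i j) (gstar_const i j).
- by rewrite !sumrB lerB // gstar_min.
Qed.

Lemma is_NBS_gstar : is_NBS T r Jhat gstar.
Proof. by do 2!split => //; move=> g hg g_le; exact: prod_gain_le. Qed.

Lemma is_NBS_eq g : is_NBS T r Jhat g -> forall i, g i = gstar i.
Proof.
move=> [hg [g_le gmax]] i.
have [_ eq_prod] := prod_gain_le hg g_le.
have : [forall i, Jhat i - g i == Jhat i - gstar i].
  by rewrite -eq_prod eq_le gmax // (prod_gain_le hg g_le).
by move=> /forallP /(_ i) /eqP; lra.
Qed.

Hypothesis swap_inv : forall i k g, inG T r g <-> inG T r (swap i k g).

Lemma pareto_symmetric_eq g :
  inG T r g -> pareto_N2 T r g -> symmetry_N3 T r Jhat g -> forall i, g i = gstar i.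
Proof.
move=> hg pareto symm i.
have g_const j : g j = g i by apply: symm; [exact: Jhat_const | exact: swap_inv].
have gstar_le : gstar i <= g i.
  exact: ler_sum_const (gstar_const^~ i) g_const (gstar_min hg).
apply/eqP; rewrite eq_le gstar_le andbT leNgt; apply/negP => lt_gi.
apply: pareto; exists gstar; split=> //; split; last by exists i.
by move=> j; rewrite (gstar_const j i) (g_const j) ltW.
Qed.

End NashBargaining.

Theorem theorem3p3 (R : realType) (N L : nat) (r : 'I_N -> R)
    (T : 'I_L -> R -> R) (fhat : profile R N L) :
  (0 < N)%N -> (0 < L)%N ->
  (forall i, 0 < r i) ->
  (forall i, r i = (\sum_(j < N) r j) / N%:R) ->
  (forall l, nonneg_valued (T l) /\ strictly_increasing_nonneg (T l) /\
             convex_nonneg (T l) /\ C1_nonneg (T l)) ->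
  is_NEP T r fhat ->
  (* (1) at most one g in G satisfying N2 and N3 *)
  (forall g1 g2 : 'I_N -> R,
     inG T r g1 -> pareto_N2 T r g1 -> symmetry_N3 T r (cost T fhat) g1 ->
     inG T r g2 -> pareto_N2 T r g2 -> symmetry_N3 T r (cost T fhat) g2 ->
     forall i, g1 i = g2 i) /\
  (* (2) the NBS exists; PoS = 1; and it is the cost vector of a single
     feasible, system-optimal routing profile *)
  (exists g, is_NBS T r (cost T fhat) g) /\
  (forall g, is_NBS T r (cost T fhat) g ->
     (forall fstar, is_sysopt T r fstar ->
        (\sum_(i < N) g i) / Jsys T fstar = 1) /\
     exists f, is_sysopt T r f /\ forall i, g i = cost T f i).
Proof.
move=> N0 L0 r0 req hT nep.
have r_eq i j : r i = r j by rewrite (req i) (req j).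
have Tinc l : strictly_increasing_nonneg (T l) by case: (hT l) => _ [].
have Tcvx l : convex_nonneg (T l) by case: (hT l) => _ [_ []].
have Tpos l x : 0 < x -> 0 < T l x.
  by case: (hT l) => T0 _ x0; exact: le_lt_trans (T0 0 (lexx 0)) (Tinc l 0 x (lexx 0) x0).
have /fin_all_exists[dT dT_ok] : forall l, exists dT : R -> R,
    forall x, 0 <= x -> is_derive_halfline (T l) x (dT x).
  by move=> l; have [_ [_ [_ [dT [hd _]]]]] := hT l; exists dT.
have Jhat_const i j : cost T fhat i = cost T fhat j.
  apply/eq_cost/(nep_equal_demands_symmetric Tinc Tcvx nep _ (r_eq i j)) => l.
  exact: dT_ok l _ (ftot_ge0 l nep.1).
have [fstar opt fstar_sym] := exists_symmetric_sysopt N0 L0 (fun i => ltW (r0 i)) req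
  (fun l => is_derive_halfline_continuous (dT_ok l)).
have gstar_const i j : cost T fstar i = cost T fstar j.
  by apply: eq_cost => l; rewrite (fstar_sym i j).
have gstar_min g : inG T r g -> \sum_(i < N) cost T fstar i <= \sum_(i < N) g i.
  exact: sum_inG_ge opt.2.
have gstar_le i : cost T fstar i <= cost T fhat i.
  exact: ler_sum_const (gstar_const^~ i) (Jhat_const^~ i) (opt.2 _ nep.1).
have gstar_in := inG_cost T opt.1.
have gstar_eq := pareto_symmetric_eq gstar_in gstar_const gstar_min Jhat_const
  (fun i k g => inG_swap T i k g r_eq).
split.
  move=> g1 g2 hg1 p1 s1 hg2 p2 s2 i.
  by rewrite (gstar_eq _ hg1 p1 s1) (gstar_eq _ hg2 p2 s2).
split; first by exists (cost T fstar); exact: is_NBS_gstar.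
move=> g nbs; have g_eq := is_NBS_eq gstar_in gstar_const gstar_min Jhat_const gstar_le nbs.
split; last by exists fstar.
move=> f' opt'.
have -> : Jsys T f' = Jsys T fstar.
  by apply/eqP; rewrite eq_le (opt'.2 _ opt.1) (opt.2 _ opt'.1).
by rewrite (eq_bigr _ (fun i _ => g_eq i)) divff // gt_eqF // (Jsys_gt0 N0 r0 Tpos opt.1).
Qed.
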